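(* Let $\alpha_a$ be a labeled dGL hybrid game, $S$ an inductive Angelic subvalue map for $\alpha_a$, and $\varphi$ a formula compatible with $S$ (i.e. $\models S(\mathsf{end})\rightarrow\varphi$). Then every state satisfying $S(a)$ satisfies $\langle\mathcal{U}(\alpha_a,S)\rangle\varphi$.
   Context: Differential game logic (dGL). Hybrid games are generated by $\alpha,\beta ::= x:=e \mid \alpha;\beta \mid ?Q \mid \{x'=f(x)\,\&\,Q\} \mid \alpha^{*} \mid \alpha\cup\beta \mid x:=* \mid\ !Q \mid \{x'=f(x)\,\&\,Q\}^{d} \mid \alpha^{\times} \mid \alpha\cap\beta \mid x:=\otimes$, with $x$ a real variable (vector for ODEs), $e,f(x)$ polynomial terms, $Q$ a formula. Players Angel and Demon: $x:=e$ deterministic assignment; in $x:=*$ Angel (in $x:=\otimes$ Demon) assigns any real; in $\{x'=f(x)\&Q\}$ Angel (in $\{\cdot\}^d$ Demon) chooses a duration $r\ge 0$ of following the ODE with $Q$ true throughout; $?Q$ makes Angel lose and $!Q$ makes Demon lose if $Q$ is false; in $\alpha\cup\beta$ Angel (in $\alpha\cap\beta$ Demon) chooses the branch; in $\alpha^*$ Angel (in $\alpha^\times$ Demon) decides before each iteration whether to repeat or stop; $\alpha;\beta$ sequential. Formulas: polynomial (in)equalities closed under connectives, real quantifiers, and modalities $\langle\alpha\rangle\varphi$ (Angel can win $\alpha$ reaching $\varphi$) and $[\alpha]\varphi\equiv\neg\langle\alpha\rangle\neg\varphi$, with the standard dGL winning-region semantics ($\langle x:=*\rangle\varphi\leftrightarrow\exists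 x\varphi$, $\langle x:=\otimes\rangle\varphi\leftrightarrow\forall x\varphi$, $\langle ?Q\rangle\varphi\leftrightarrow Q\wedge\varphi$, $\langle !Q\rangle\varphi\leftrightarrow(Q\rightarrow\varphi)$, $\cup$ as disjunction, $\cap$ as conjunction, $\langle\alpha;\beta\rangle\varphi\leftrightarrow\langle\alpha\rangle\langle\beta\rangle\varphi$, Angel ODE existential, Demon ODE universal, $\langle\alpha^*\rangle$ least and $\langle\alpha^\times\rangle$ greatest fixed point). $\models$ denotes validity. Labels: every node of the syntax tree carries a unique label; $\alpha_a$ has root label $a$; $\mathrm{nodes}(\alpha_a)$ is its set of subgame labels; $\mathsf{end}$ is a special extra label. A map $S$ assigns formulas to a label set containing $\mathrm{nodes}(\alpha_a)\cup\{\mathsf{end}\}$; $S\{\mathsf{end}\mapsto Q\}$ replaces the value at $\mathsf{end}$. $\gamma_g,\delta_d$ denote immediate subgames with root labels $g,d$. Existential projection $\mathcal{P}(\alpha_a,S)$: $(x:=* )_a\mapsto(x:=* )_a;?S(\mathsf{end})$; $\{x'=f(x)\&Q\}_a\mapsto\{x'=f(x)\&Q\}_a;?S(\mathsf{end})$; $(\gamma_g\cup\delta_d)_a\mapsto(?S(g);\mathcal{P}(\gamma_g,S))\cup(?S(d);\mathcal{P}(\delta_d,S))$; $((\gamma_g)^* )_a\mapsto(?S(g);\mathcal{P}(\gamma_g,S\{\mathsf{end}\mapsto S(a)\}))^*;?S(\mathsf{end})$; $(\gamma_g;\delta_d)_a\mapsto\mathcal{P}(\gamma_g,S\{\mathsf{end}\mapsto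 S(d)\});\mathcal{P}(\delta_d,S)$; $(\gamma_g\cap\delta_d)_a\mapsto\mathcal{P}(\gamma_g,S)\cap\mathcal{P}(\delta_d,S)$; $((\gamma_g)^\times)_a\mapsto\mathcal{P}(\gamma_g,S\{\mathsf{end}\mapsto S(a)\})^\times$; $x:=e,x:=\otimes,?Q,!Q,\{x'=f(x)\&Q\}^d$ unchanged (labels preserved, new nodes fresh labels). Universal projection $\mathcal{U}(\alpha_a,S)$: $(x:=* )_a\mapsto (x:=\otimes)_a;\,!S(\mathsf{end})$; $\{x'=f(x)\&Q\}_a\mapsto(\{x'=f(x)\&Q\}^d)_a;\,!S(\mathsf{end})$; $(\gamma_g\cup\delta_d)_a\mapsto(!S(g);\mathcal{U}(\gamma_g,S))\cap(!S(d);\mathcal{U}(\delta_d,S))$; $((\gamma_g)^* )_a\mapsto(!S(g);\mathcal{U}(\gamma_g,S\{\mathsf{end}\mapsto S(a)\}))^{\times};\,!S(\mathsf{end})$; $(\gamma_g;\delta_d)_a\mapsto\mathcal{U}(\gamma_g,S\{\mathsf{end}\mapsto S(d)\});\mathcal{U}(\delta_d,S)$; $(\gamma_g\cap\delta_d)_a\mapsto\mathcal{U}(\gamma_g,S)\cap\mathcal{U}(\delta_d,S)$; $((\gamma_g)^\times)_a\mapsto\mathcal{U}(\gamma_g,S\{\mathsf{end}\mapsto S(a)\})^\times$; $x:=e,x:=\otimes,?Q,!Q,\{x'=f(x)\&Q\}^d$ unchanged (labels preserved, new nodes fresh labels). Inductive Angelic subvalue map ($S\Vdash\alpha_a$), recursively: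 atomic $\alpha$ ($x:=e,x:=*,x:=\otimes,?Q,!Q$, Angel or Demon ODE): $\models S(a)\rightarrow\langle\alpha\rangle S(\mathsf{end})$; $(\gamma_g\cup\delta_d)_a$: $\models S(a)\rightarrow S(g)\vee S(d)$, $S\Vdash\gamma_g$, $S\Vdash\delta_d$; $(\gamma_g\cap\delta_d)_a$: $\models S(a)\rightarrow S(g)\wedge S(d)$ and both; $(\gamma_g;\delta_d)_a$: $\models S(a)\rightarrow S(g)$, $S\{\mathsf{end}\mapsto S(d)\}\Vdash\gamma_g$, $S\Vdash\delta_d$; $((\gamma_g)^* )_a$: $\models S(a)\rightarrow\langle\mathcal{P}(\alpha_a,S)\rangle S(\mathsf{end})$ and $S\{\mathsf{end}\mapsto S(a)\}\Vdash\gamma_g$; $((\gamma_g)^\times)_a$: $\models S(a)\rightarrow S(g)\wedge S(\mathsf{end})$ and $S\{\mathsf{end}\mapsto S(a)\}\Vdash\gamma_g$. *)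

From Stdlib Require Import Reals List.
Import ListNotations.
Open Scope R_scope.

Definition var := nat.
Definition state := var -> R.

Inductive term : Type :=
| TVar : var -> term
| TConst : R -> term
| TNeg : term -> term
| TPlus : term -> term -> term
| TTimes : term -> term -> term.

Fixpoint teval (e : term) (w : state) : R :=
  match e with
  | TVar x => w x
  | TConst c => c
  | TNeg e1 => - teval e1 w
  | TPlus e1 e2 => teval e1 w + teval e2 w
  | TTimes e1 e2 => teval e1 w * teval e2 w
  end.

(* an ODE system x1'=e1,...,xn'=en  (vector ODE) *)
Definition odesys := list (var * term).

Inductive fmla : Type :=
| FTrue : fmla
| FFalse : fmla
| FGe : term -> term -> fmla
| FGt : term -> term -> fmla
| FEq : term -> term -> fmla
| FNot : fmla -> fmla
| FAnd : fmla -> fmla -> fmla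
| FOr : fmla -> fmla -> fmla
| FImp : fmla -> fmla -> fmla
| FForall : var -> fmla -> fmla
| FExists : var -> fmla -> fmla
| FDia : game -> fmla -> fmla
with game : Type :=
| GAssign : var -> term -> game
| GAssignAny : var -> game
| GAssignDemon : var -> game
| GTest : fmla -> game
| GDTest : fmla -> game
| GODE : odesys -> fmla -> game
| GDODE : odesys -> fmla -> game
| GSeq : game -> game -> game
| GChoice : game -> game -> game
| GDChoice : game -> game -> game
| GStar : game -> game
| GCross : game -> game.

Definition FBox (a : game) (p : fmla) : fmla := FNot (FDia a (FNot p)).

Definition upd (w : state) (x : var) (r : R) : state :=
  fun y => if Nat.eqb y x then r else w y.

(* derivative of g on [0,r] relative to the interval (one-sided at endpoints) *)
Definition has_deriv_on (g g' : R -> R) (r : R) : Prop :=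
  forall t, 0 <= t <= r -> forall eps, 0 < eps -> exists delta, 0 < delta /\
    forall s, 0 <= s <= r -> s <> t -> Rabs (s - t) < delta ->
      Rabs ((g s - g t) / (s - t) - g' t) < eps.

Definition ode_run (sys : odesys) (Q : state -> Prop) (w : state) (r : R)
  (y : R -> state) : Prop :=
  0 <= r /\
  (forall x, y 0 x = w x) /\
  (forall t, 0 <= t <= r -> forall x, ~ In x (map fst sys) -> y t x = w x) /\
  (forall x e, In (x, e) sys -> has_deriv_on (fun t => y t x) (fun t => teval e (y t)) r) /\
  (forall t, 0 <= t <= r -> Q (y t)).

(* fsem phi = set of states satisfying phi;
   gsem alpha X = winning region of Angel for reaching X in alpha *)
Fixpoint fsem (p : fmla) : state -> Prop :=
  match p with
  | FTrue => fun _ => True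
  | FFalse => fun _ => False
  | FGe e1 e2 => fun w => teval e1 w >= teval e2 w
  | FGt e1 e2 => fun w => teval e1 w > teval e2 w
  | FEq e1 e2 => fun w => teval e1 w = teval e2 w
  | FNot q => fun w => ~ fsem q w
  | FAnd q1 q2 => fun w => fsem q1 w /\ fsem q2 w
  | FOr q1 q2 => fun w => fsem q1 w \/ fsem q2 w
  | FImp q1 q2 => fun w => fsem q1 w -> fsem q2 w
  | FForall x q => fun w => forall r, fsem q (upd w x r)
  | FExists x q => fun w => exists r, fsem q (upd w x r)
  | FDia a q => gsem a (fsem q)
  end
with gsem (a : game) (X : state -> Prop) : state -> Prop :=
  match a with
  | GAssign x e => fun w => X (upd w x (teval e w))
  | GAssignAny x => fun w => exists r, X (upd w x r)
  | GAssignDemon x => fun w => forall r, X (upd w x r)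
  | GTest Q => fun w => fsem Q w /\ X w
  | GDTest Q => fun w => fsem Q w -> X w
  | GODE sys Q => fun w => exists r y, ode_run sys (fsem Q) w r y /\ X (y r)
  | GDODE sys Q => fun w => forall r y, ode_run sys (fsem Q) w r y -> X (y r)
  | GSeq b c => gsem b (gsem c X)
  | GChoice b c => fun w => gsem b X w \/ gsem c X w
  | GDChoice b c => fun w => gsem b X w /\ gsem c X w
  | GStar b => (* least fixed point of Z |-> X u gsem b Z *)
      fun w => forall Z : state -> Prop,
        (forall v, X v \/ gsem b Z v -> Z v) -> Z w
  | GCross b => (* greatest fixed point of Z |-> X n gsem b Z *)
      fun w => exists Z : state -> Prop, Z w /\
        (forall v, Z v -> X v /\ gsem b Z v)
  end.

Definition valid (p : fmla) : Prop := forall w, fsem p w.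

(* Labels: a node is labelled by its position (path of child indices)
   inside the labelled game; this makes labels unique.  [End] is the extra
   label end.  The immediate subgames of the node labelled a are labelled
   a ++ [0] and (for binary operators) a ++ [1]. *)
Inductive lbl : Type :=
| Node : list nat -> lbl
| End : lbl.

Definition lmap := lbl -> fmla.

Definition set_end (S : lmap) (Q : fmla) : lmap :=
  fun l => match l with End => Q | Node p => S (Node p) end.

Definition lchild (a : list nat) : list nat := a ++ [0%nat].
Definition rchild (a : list nat) : list nat := a ++ [1%nat].

Fixpoint eproj (al : game) (a : list nat) (S : lmap) : game :=
  match al with
  | GAssignAny x => GSeq (GAssignAny x) (GTest (S End))
  | GODE sys Q => GSeq (GODE sys Q) (GTest (S End))
  | GChoice g d =>
      GChoice (GSeq (GTest (S (Node (lchild a)))) (eproj g (lchild a) S))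
              (GSeq (GTest (S (Node (rchild a)))) (eproj d (rchild a) S))
  | GStar g =>
      GSeq (GStar (GSeq (GTest (S (Node (lchild a))))
                        (eproj g (lchild a) (set_end S (S (Node a))))))
           (GTest (S End))
  | GSeq g d =>
      GSeq (eproj g (lchild a) (set_end S (S (Node (rchild a)))))
           (eproj d (rchild a) S)
  | GDChoice g d => GDChoice (eproj g (lchild a) S) (eproj d (rchild a) S)
  | GCross g => GCross (eproj g (lchild a) (set_end S (S (Node a))))
  | _ => al
  end.

Fixpoint uproj (al : game) (a : list nat) (S : lmap) : game :=
  match al with
  | GAssignAny x => GSeq (GAssignDemon x) (GDTest (S End))
  | GODE sys Q => GSeq (GDODE sys Q) (GDTest (S End))
  | GChoice g d =>
      GDChoice (GSeq (GDTest (S (Node (lchild a)))) (uproj g (lchild a) S))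
               (GSeq (GDTest (S (Node (rchild a)))) (uproj d (rchild a) S))
  | GStar g =>
      GSeq (GCross (GSeq (GDTest (S (Node (lchild a))))
                         (uproj g (lchild a) (set_end S (S (Node a))))))
           (GDTest (S End))
  | GSeq g d =>
      GSeq (uproj g (lchild a) (set_end S (S (Node (rchild a)))))
           (uproj d (rchild a) S)
  | GDChoice g d => GDChoice (uproj g (lchild a) S) (uproj d (rchild a) S)
  | GCross g => GCross (uproj g (lchild a) (set_end S (S (Node a))))
  | _ => al
  end.

Fixpoint subvalue (al : game) (a : list nat) (S : lmap) : Prop :=
  match al with
  | GChoice g d =>
      valid (FImp (S (Node a)) (FOr (S (Node (lchild a))) (S (Node (rchild a))))) /\
      subvalue g (lchild a) S /\ subvalue d (rchild a) S
  | GDChoice g d =>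
      valid (FImp (S (Node a)) (FAnd (S (Node (lchild a))) (S (Node (rchild a))))) /\
      subvalue g (lchild a) S /\ subvalue d (rchild a) S
  | GSeq g d =>
      valid (FImp (S (Node a)) (S (Node (lchild a)))) /\
      subvalue g (lchild a) (set_end S (S (Node (rchild a)))) /\
      subvalue d (rchild a) S
  | GStar g =>
      valid (FImp (S (Node a)) (FDia (eproj al a S) (S End))) /\
      subvalue g (lchild a) (set_end S (S (Node a)))
  | GCross g =>
      valid (FImp (S (Node a)) (FAnd (S (Node (lchild a))) (S End))) /\
      subvalue g (lchild a) (set_end S (S (Node a)))
  | _ =>
      valid (FImp (S (Node a)) (FDia al (S End)))
  end.

(* In the universal projection every choice of Angel has become a choice of
   Demon guarded by a Demon test !S(l), and her atomic moves that remain are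
   covered by the subvalue conditions.  So whatever Demon does, either one of
   his tests fails and he loses, or S holds at the node reached; in particular
   S(a) is an invariant of the loops, which Demon now controls. *)
From Stdlib Require Import Reals List.

Lemma gsem_monotone (g : game) (X Y : state -> Prop) :
  (forall v, X v -> Y v) -> forall w, gsem g X w -> gsem g Y w.
Proof.
  revert X Y; induction g; intros X Y HXY w Hw; simpl in *; firstorder.
Qed.

Lemma uproj_winning (al : game) (a : list nat) (S : lmap) (X : state -> Prop) :
  subvalue al a S -> (forall v, fsem (S End) v -> X v) ->
  forall w, fsem (S (Node a)) w -> gsem (uproj al a S) X w.
Proof.
  revert a S X.
  induction al as [| | | | | | | g IHg d IHd | g IHg d IHd | g IHg d IHd
                   | g IHg | g IHg];
    intros a S X Hsub HX w Hw;
    try (apply (gsem_monotone _ (fsem (S End)) X HX); exact (Hsub w Hw));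
    simpl in *.
  - intros r Hend; auto.
  - intros r y _ Hend; auto.
  - destruct Hsub as [Hg [Hsubg Hsubd]].
    apply (IHg (lchild a) (set_end S (S (Node (rchild a))))).
    + exact Hsubg.
    + intros v Hv; apply (IHd (rchild a) S); auto.
    + exact (Hg w Hw).
  - destruct Hsub as [_ [Hsubg Hsubd]]; split; intros Htest.
    + apply (IHg (lchild a) S); auto.
    + apply (IHd (rchild a) S); auto.
  - destruct Hsub as [Hgd [Hsubg Hsubd]]; destruct (Hgd w Hw) as [Hg Hd]; split.
    + apply (IHg (lchild a) S); auto.
    + apply (IHd (rchild a) S); auto.
  - destruct Hsub as [_ Hsubg].
    exists (fsem (S (Node a))); split; [exact Hw |].
    intros v Hv; split; [intros Hend; auto |].
    intros Htest; apply (IHg (lchild a) (set_end S (S (Node a)))); auto.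
  - destruct Hsub as [Hinv Hsubg].
    exists (fsem (S (Node a))); split; [exact Hw |].
    intros v Hv; destruct (Hinv v Hv) as [Hg Hend]; split; [auto |].
    apply (IHg (lchild a) (set_end S (S (Node a)))); auto.
Qed.

Theorem mainTheorem10 (al : game) (a : list nat) (S : lmap) (phi : fmla) :
  subvalue al a S ->
  valid (FImp (S End) phi) ->
  forall w : state, fsem (S (Node a)) w -> fsem (FDia (uproj al a S) phi) w.
Proof.
  intros Hsub Hphi w Hw.
  exact (uproj_winning al a S (fsem phi) Hsub Hphi w Hw).
Qed.
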